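(* Let $N\ge1$ and let $q,\gamma,s_0,\xi_0$ be generic nonzero complex numbers; set $u_0=(s_0\xi_0\gamma)^{-1}$. Define $$\mathsf z(u,v)=\frac{(1-\gamma)(q-\gamma s_0^2)(1-uv)+(1-q)(1-\gamma\xi_0s_0u)(1-\gamma\xi_0^{-1}s_0v)}{(1-uv)(1-quv)}.$$ Then, with $u_i=u_0q^{i-1}$ for $i=1,\dots,N$ and generic $v_1,\dots,v_N$, $$\frac{\prod_{i,j=1}^N(1-u_iv_j)(1-qu_iv_j)}{\prod_{1\le i<j\le N}(u_i-u_j)(v_i-v_j)}\det[\mathsf z(u_i,v_j)]_{i,j=1}^N=q^{N^2}\prod_{i,j=1}^N\Big(1-v_i\frac{q^{j-1}}{s_0\xi_0\gamma}\Big)\prod_{j=1}^N(1-\gamma q^{-j+1})(1-s_0^2\gamma q^{-j}).$$ *)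

From HB Require Import structures.
From mathcomp Require Import all_boot all_order all_algebra.
From mathcomp Require Import complex.
From mathcomp Require Import reals.
Set Implicit Arguments. Unset Strict Implicit. Unset Printing Implicit Defensive.
Import Order.TTheory GRing.Theory Num.Theory.
Local Open Scope ring_scope.

Definition zfun (C : fieldType) (q gamma s0 xi0 : C) (u v : C) : C :=
  ((1 - gamma) * (q - gamma * s0 ^+ 2) * (1 - u * v)
   + (1 - q) * (1 - gamma * xi0 * s0 * u) * (1 - gamma * xi0^-1 * s0 * v))
  / ((1 - u * v) * (1 - q * u * v)).

From HB Require Import structures.
From mathcomp Require Import all_boot all_order all_algebra.
From mathcomp Require Import complex.
From mathcomp Require Import reals.
From mathcomp Require Import ring.
Set Implicit Arguments. Unset Strict Implicit. Unset Printing Implicit Defensive.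
Import Order.TTheory GRing.Theory Num.Theory.
Local Open Scope ring_scope.

(* Proof of the determinant evaluation for the matrix [z(u_i, v_j)] with
   u_i = u0 q^i, indices running over i = 0, ..., N-1.

   1. Partial fractions: with Q = q^i, z(u0 Q, v) splits as
        c_i / (1 - u_i v) + d_i / (1 - q u_i v),
      where c_i = (1 - q^i)(1 - gamma^2 s0^2 q^-i) and d_i = q^(i+1) e_i,
      e_i = (1 - gamma q^-i)(1 - s0^2 gamma q^-(i+1)).  Since q u_i = u_(i+1)
      and c_0 = 0, the matrix Z = [z(u_i, v_j)] factors as Z = T * C, where
      C = [1 / (1 - q u_i v_j)] is a Cauchy matrix and T is lower bidiagonal
      with diagonal d_i.
   2. det T = prod_i d_i (triangular matrix).
   3. Cauchy's determinant: det [1/(1 - x_i y_j)] * prod (1 - x_i y_j)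
      = prod_(i<j) (x_i - x_j)(y_i - y_j), by eliminating the first column
      and induction on the size.
   4. The powers of q collected from d_i and from x_i - x_j = q (u_i - u_j)
      multiply to q^(N^2), which gives the theorem. *)

Definition cross_diff (F : pzRingType) n (x y : 'I_n -> F) : F :=
  \prod_(i < n) \prod_(j < n | (i < j)%N) ((x i - x j) * (y i - y j)).

Definition cauchy_mx (F : fieldType) n (x y : 'I_n -> F) : 'M[F]_n :=
  \matrix_(i, j) (1 - x i * y j)^-1.

Definition bidiag_mx (F : pzRingType) n (d c : 'I_n -> F) : 'M[F]_n :=
  \matrix_(i, k) (if k == i then d i else if (k.+1 == i)%N then c i else 0).

Lemma det_scale_rows_cols (F : comPzRingType) n (a b : 'I_n -> F) (M : 'M[F]_n) :
  \det (\matrix_(i, j) (a i * b j * M i j))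
  = (\prod_i a i) * (\prod_j b j) * \det M.
Proof.
have -> : \matrix_(i, j) (a i * b j * M i j)
          = diag_mx (\row_i a i) *m M *m diag_mx (\row_j b j).
  by apply/matrixP => i j; rewrite mul_mx_diag mul_diag_mx !mxE mulrAC.
rewrite !det_mulmx !det_diag.
under eq_bigr do rewrite mxE.
under [X in _ * _ * X]eq_bigr do rewrite mxE.
by rewrite mulrAC.
Qed.

Lemma prod_grid_split0 (F : comPzRingType) n (f : 'I_n.+1 -> 'I_n.+1 -> F) :
  \prod_i \prod_j f i j
  = f ord0 ord0 * (\prod_j f ord0 (lift ord0 j))
    * ((\prod_i f (lift ord0 i) ord0)
       * \prod_i \prod_j f (lift ord0 i) (lift ord0 j)).
Proof.
rewrite big_ord_recl; congr (_ * _); first by rewrite big_ord_recl.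
by rewrite -big_split; apply: eq_bigr => i _; rewrite big_ord_recl.
Qed.

Lemma prod_triangle_split0 (F : comPzRingType) n (f : 'I_n.+1 -> 'I_n.+1 -> F) :
  \prod_(i < n.+1) \prod_(j < n.+1 | (i < j)%N) f i j
  = (\prod_j f ord0 (lift ord0 j))
    * \prod_(i < n) \prod_(j < n | (i < j)%N) f (lift ord0 i) (lift ord0 j).
Proof.
rewrite big_ord_recl; congr (_ * _).
  by rewrite big_mkcond big_ord_recl /= mul1r.
apply: eq_bigr => i _.
rewrite big_mkcond big_ord_recl /= mul1r [RHS]big_mkcond.
by apply: eq_bigr => j _; rewrite /bump /= !add1n ltnS.
Qed.

Lemma det_bidiag_mx (F : comPzRingType) n (d c : 'I_n -> F) :
  \det (bidiag_mx d c) = \prod_i d i.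
Proof.
rewrite det_trig; last first.
  apply/is_trig_mxP => i k lt_ik; rewrite mxE.
  by rewrite -val_eqE /= (gtn_eqF lt_ik) (gtn_eqF (leqW lt_ik)).
by apply: eq_bigr => i _; rewrite mxE eqxx.
Qed.

Section Cauchy.
Variables (F : fieldType) (n : nat) (x y : 'I_n.+1 -> F).
Hypothesis xy_neq1 : forall i j, 1 - x i * y j != 0.

Let x' (i : 'I_n) := x (lift ord0 i).
Let y' (j : 'I_n) := y (lift ord0 j).

(* One elimination step: subtracting suitable multiples of row 0 from the other
   rows clears column 0, and the remaining minor is again a Cauchy matrix with
   its rows and columns rescaled. *)
Lemma cauchy_det_step :
  \det (cauchy_mx x y)
  = (1 - x ord0 * y ord0)^-1
    * (\prod_i ((x' i - x ord0) / (1 - x' i * y ord0)))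
    * (\prod_j ((y' j - y ord0) / (1 - x ord0 * y' j)))
    * \det (cauchy_mx x' y').
Proof.
set A := cauchy_mx x y.
pose r i := if i == ord0 then 0 else (1 - x ord0 * y ord0) / (1 - x i * y ord0).
have r_lift i : r (lift ord0 i) = (1 - x ord0 * y ord0) / (1 - x' i * y ord0).
  by rewrite /r eq_sym (negbTE (neq_lift _ _)).
pose E : 'M[F]_n.+1 := 1%:M - \matrix_(i, j) ((j == ord0)%:R * r i).
have detE : \det E = 1.
  rewrite det_trig.
    apply: big1 => i _; rewrite !mxE eqxx /r.
    by case: (i == ord0); rewrite ?mulr0 ?mul0r subr0.
  apply/is_trig_mxP => i j lt_ij; rewrite !mxE -!val_eqE /=.
  by rewrite (ltn_eqF lt_ij) (gtn_eqF (leq_ltn_trans _ lt_ij)) // mul0r subrr.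
have EA_ij i j : (E *m A) i j = A i j - r i * A ord0 j.
  rewrite mulmxBl mul1mx !mxE; congr (_ - _).
  rewrite (bigD1 ord0) //= big1 ?addr0; first by rewrite !mxE eqxx mul1r.
  by move=> k /negbTE nk; rewrite !mxE nk !mul0r.
have <- : \det (E *m A) = \det A by rewrite det_mulmx detE mul1r.
rewrite (expand_det_col _ ord0).
rewrite big_ord_recl big1 ?addr0; last first.
  move=> i _; rewrite EA_ij r_lift !mxE.
  have h00 := xy_neq1 ord0 ord0; have hi0 := xy_neq1 (lift ord0 i) ord0.
  rewrite [X in X * _](_ : _ = 0) ?mul0r //.
  by rewrite /x'; field; rewrite h00 hi0.
rewrite /cofactor expr0 mul1r.
have -> : row' ord0 (col' ord0 (E *m A))
  = \matrix_(i, j) ((x' i - x ord0) / (1 - x' i * y ord0)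
                    * ((y' j - y ord0) / (1 - x ord0 * y' j))
                    * cauchy_mx x' y' i j).
  apply/matrixP => i j.
  rewrite (_ : row' _ _ _ _ = (E *m A) (lift ord0 i) (lift ord0 j));
    last by rewrite !mxE.
  rewrite EA_ij r_lift !mxE /x' /y'.
  have h00 := xy_neq1 ord0 ord0; have hi0 := xy_neq1 (lift ord0 i) ord0.
  have h0j := xy_neq1 ord0 (lift ord0 j).
  have hij := xy_neq1 (lift ord0 i) (lift ord0 j).
  by field; rewrite ?h00 ?hi0 ?h0j ?hij.
rewrite det_scale_rows_cols EA_ij /r eqxx mul0r subr0 mxE.
by rewrite !mulrA.
Qed.

End Cauchy.

Lemma cauchy_det (F : fieldType) n (x y : 'I_n -> F) :
  (forall i j, 1 - x i * y j != 0) ->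
  \det (cauchy_mx x y) * \prod_i \prod_j (1 - x i * y j) = cross_diff x y.
Proof.
elim: n x y => [|n IH] x y xy_neq1; first by rewrite det_mx00 /cross_diff !big_ord0 mulr1.
set x' := fun i : 'I_n => x (lift ord0 i); set y' := fun j : 'I_n => y (lift ord0 j).
rewrite cauchy_det_step // prod_grid_split0 /cross_diff prod_triangle_split0.
have := IH x' y' (fun i j => xy_neq1 _ _); rewrite /cross_diff => <-.
rewrite !prodf_div.
have -> : \prod_(j < n) ((x ord0 - x (lift ord0 j)) * (y ord0 - y (lift ord0 j)))
          = \prod_(j < n) (x' j - x ord0) * \prod_(j < n) (y' j - y ord0).
  by rewrite -big_split; apply: eq_bigr => j _; rewrite -mulrNN !opprB.
have nx : \prod_(i < n) (1 - x' i * y ord0) != 0 by apply/prodf_neq0 => i _; apply: xy_neq1.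
have ny : \prod_(j < n) (1 - x ord0 * y' j) != 0 by apply/prodf_neq0 => j _; apply: xy_neq1.
by rewrite /x' /y' in nx ny *; field; rewrite nx ny xy_neq1.
Qed.

Lemma cross_diff_scale (F : comPzRingType) n (c : F) (x y : 'I_n -> F) :
  cross_diff (fun i => c * x i) y
  = (\prod_(i < n) \prod_(j < n | (i < j)%N) c) * cross_diff x y.
Proof.
rewrite /cross_diff -big_split; apply: eq_bigr => i _.
by rewrite -big_split; apply: eq_bigr => j _; rewrite -mulrBr /= mulrA.
Qed.

Lemma cross_diff_neq0 (F : idomainType) n (x y : 'I_n -> F) :
  (forall i j, i != j -> x i != x j) -> (forall i j, i != j -> y i != y j) ->
  cross_diff x y != 0.
Proof.
move=> x_inj y_inj; apply/prodf_neq0 => i _; apply/prodf_neq0 => j lt_ij.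
by rewrite mulf_neq0 // subr_eq0 ?x_inj ?y_inj // -val_eqE /= ltn_eqF.
Qed.

Lemma zfun_partial_fractions (F : fieldType) (q gamma s0 xi0 v Q : F) :
  q != 0 -> gamma != 0 -> s0 != 0 -> xi0 != 0 -> Q != 0 ->
  let u := (s0 * xi0 * gamma)^-1 * Q in
  1 - u * v != 0 -> 1 - q * u * v != 0 ->
  zfun q gamma s0 xi0 u v
  = (1 - Q) * (1 - gamma ^+ 2 * s0 ^+ 2 / Q) * (1 - u * v)^-1
    + q * Q * ((1 - gamma / Q) * (1 - s0 ^+ 2 * gamma / (q * Q)))
      * (1 - q * u * v)^-1.
Proof.
move=> nq ng ns nx nQ u nuv nquv; rewrite /zfun /u in nuv nquv *.
have clear_denom (a : F) :
    1 - a * ((s0 * xi0 * gamma)^-1 * Q) * v != 0 ->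
    s0 * xi0 * gamma - a * Q * v != 0.
  move=> na; rewrite (_ : _ - _ = s0 * xi0 * gamma * (1 - a * ((s0 * xi0 * gamma)^-1 * Q) * v)).
    by rewrite !mulf_neq0.
  by field; rewrite ng ns nx.
have := clear_denom 1; rewrite !mul1r => /(_ nuv) n1.
have n2 := clear_denom q nquv.
by field; rewrite nq ng ns nx nQ n1 n2.
Qed.

Lemma prod_q_powers (F : comPzRingType) (q : F) N :
  (\prod_(i < N) q ^+ i.+1) * \prod_(i < N) \prod_(j < N | (i < j)%N) q
  = q ^+ (N ^ 2).
Proof.
rewrite -big_split /= (eq_bigr (fun _ => q ^+ N)) ?prodr_const ?card_ord -?exprM //.
move=> i _.
have -> : q ^+ i.+1 = \prod_(j < N | (j < i.+1)%N) q.
  by rewrite -(big_ord_widen _ (fun _ => q) (ltn_ord i)) prodr_const card_ord.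
have -> : q ^+ N = \prod_(j < N) q by rewrite prodr_const card_ord.
rewrite [RHS](bigID (fun j : 'I_N => (i < j)%N)) /=.
by rewrite mulrC; congr (_ * _); apply: eq_bigl => j; rewrite ltnS leqNgt.
Qed.

(* For u_i = u0 q^i the z-matrix is a lower bidiagonal matrix times the Cauchy
   matrix in x_i = q u_i = u_(i+1) and v_j; the subdiagonal coefficient c_i
   multiplies 1/(1 - u_i v_j) = 1/(1 - x_(i-1) v_j), and c_0 = 0. *)
Lemma zfun_mx_factor (F : fieldType) N (q gamma s0 xi0 : F) (u v : 'I_N -> F) :
  q != 0 -> gamma != 0 -> s0 != 0 -> xi0 != 0 ->
  (forall i, u i = (s0 * xi0 * gamma)^-1 * q ^+ i) ->
  (forall i j, 1 - u i * v j != 0) ->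
  (forall i j, 1 - q * u i * v j != 0) ->
  \matrix_(i, j) zfun q gamma s0 xi0 (u i) (v j)
  = bidiag_mx
      (fun i : 'I_N => q ^+ i.+1
          * ((1 - gamma / q ^+ i) * (1 - s0 ^+ 2 * gamma / q ^+ i.+1)))
      (fun i : 'I_N => (1 - q ^+ i) * (1 - gamma ^+ 2 * s0 ^+ 2 / q ^+ i))
    *m cauchy_mx (fun i => q * u i) v.
Proof.
move=> nq ng ns nx u_def nuv nquv; apply/matrixP => i j.
rewrite !mxE (bigD1 i) //= !mxE eqxx.
have := nuv i j; have := nquv i j; rewrite u_def => nquv_ij nuv_ij.
rewrite (zfun_partial_fractions nq ng ns nx (expf_neq0 i nq) nuv_ij nquv_ij).
rewrite -exprS addrC; congr (_ + _); clear nuv_ij nquv_ij.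
case: i => [[|m] lt_iN] in nuv nquv *.
  by rewrite expr0 subrr !mul0r big1 // => k nk; rewrite !mxE (negbTE nk) mul0r.
have lt_mN : (m < N)%N by apply: ltnW.
rewrite (bigD1 (Ordinal lt_mN)) -?val_eqE /= ?(ltn_eqF (ltnSn m)) //.
rewrite big1 ?addr0; last first.
  move=> k /andP[nk]; rewrite -val_eqE /= => /negbTE nkm.
  by rewrite !mxE (negbTE nk) eqSS nkm mul0r.
by rewrite !mxE -val_eqE /= (ltn_eqF (ltnSn m)) eqxx !u_def /= exprS [q * (_ * _)]mulrCA.
Qed.

Theorem mainTheorem3 (R : realType) (N : nat) (q gamma s0 xi0 : R[i])
    (v : 'I_N -> R[i]) :
  (0 < N)%N ->
  q != 0 -> gamma != 0 -> s0 != 0 -> xi0 != 0 ->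
  let u0 := (s0 * xi0 * gamma)^-1 in
  let u := fun i : 'I_N => u0 * q ^+ i in
  (forall i j : 'I_N, i != j -> u i != u j) ->
  (forall i j : 'I_N, i != j -> v i != v j) ->
  (forall i j : 'I_N, 1 - u i * v j != 0) ->
  (forall i j : 'I_N, 1 - q * u i * v j != 0) ->
  (\prod_(i < N) \prod_(j < N) ((1 - u i * v j) * (1 - q * u i * v j)))
    / (\prod_(i < N) \prod_(j < N | (i < j)%N) ((u i - u j) * (v i - v j)))
    * \det (\matrix_(i < N, j < N) zfun q gamma s0 xi0 (u i) (v j))
  = q ^+ (N ^ 2)
    * (\prod_(i < N) \prod_(j < N) (1 - v i * q ^+ j / (s0 * xi0 * gamma)))
    * \prod_(j < N) ((1 - gamma / q ^+ j) * (1 - s0 ^+ 2 * gamma / q ^+ j.+1)).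
Proof.
move=> _ nq ng ns nx u0 u u_inj v_inj nuv nquv.
rewrite (zfun_mx_factor nq ng ns nx (fun i => erefl (u i)) nuv nquv) det_mulmx det_bidiag_mx.
have nP : \prod_i \prod_j (1 - q * u i * v j) != 0.
  by apply/prodf_neq0 => i _; apply/prodf_neq0 => j _.
have det_cauchy : \det (cauchy_mx (fun i => q * u i) v)
    = (\prod_(i < N) \prod_(j < N | (i < j)%N) q) * cross_diff u v
      / \prod_i \prod_j (1 - q * u i * v j).
  by rewrite -cross_diff_scale -(cauchy_det nquv) mulfK.
have prod_pairs : \prod_(i < N) \prod_(j < N) ((1 - u i * v j) * (1 - q * u i * v j))
    = (\prod_(i < N) \prod_(j < N) (1 - v i * q ^+ j / (s0 * xi0 * gamma)))
      * \prod_i \prod_j (1 - q * u i * v j).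
  rewrite (eq_bigr (fun i => \prod_j (1 - u i * v j) * \prod_j (1 - q * u i * v j)))
    => [|i _]; last by rewrite big_split.
  rewrite big_split /= exchange_big; congr (_ * _).
  by apply: eq_bigr => j _; apply: eq_bigr => i _; rewrite /u /u0 mulrC mulrA mulrAC.
rewrite det_cauchy prod_pairs -/(cross_diff u v) big_split /= -(prod_q_powers q N).
by field; rewrite nP (cross_diff_neq0 u_inj v_inj).
Qed.
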